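(* Let $n,m$ be positive integers, $A_1,\dots,A_m\in\mathbb{S}_n$, $\mathcal{A}(X)=(\langle A_i,X\rangle)_{i=1}^m$, $\mathcal{A}^*(y)=\sum_i y_iA_i$, with $\mathcal{A}\mathcal{A}^*$ invertible; let $b\in\mathbb{R}^m$, $C\in\mathbb{S}_n$, $D:=\mathcal{A}^*((\mathcal{A}\mathcal{A}^* )^{-1}b)$. Assume the problem $\inf\{\langle D,S+C\rangle: y\in\mathbb{R}^m,\ S\succeq0,\ \operatorname{diag}(S)=\mathbf{1},\ S=\mathcal{A}^*(y)-C\}$ admits a KKT point. Let $0<\sigma_{\min}<\sigma_{\max}$ and let $\{\varepsilon_k\},\{\tau_k\}\subseteq(0,\infty)$ with $\sum_k\varepsilon_k<\infty$, $\sum_k\tau_k<\infty$. Consider sequences generated as follows: $y^0=0$, $\widetilde{X}^0=0$, and for $k=0,1,2,\dots$: choose $\sigma_k\in[\sigma_{\min},\sigma_{\max}]$, a positive integer $p_{k+1}$ and $Y^{k+1}\in\mathbb{R}^{n\times p_{k+1}}$ all of whose rows have Euclidean norm $1$; set $S^{k+1}=Y^{k+1}(Y^{k+1})^{\intercal}$, $y^{k+1}=(\mathcal{A}\mathcal{A}^* )^{-1}\mathcal{A}(S^{k+1}+C)$, $\widetilde{X}^{k+1}=\widetilde{X}^k-\sigma_k(\mathcal{A}^*(y^{k+1})-S^{k+1}-C)$, $z^{k+1}=\operatorname{diag}((\widetilde{X}^{k+1}+D)S^{k+1})$, $X^{k+1}=\widetilde{X}^{k+1}+D-\operatorname{Diag}(z^{k+1})$;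 and suppose that for every $k$, $\|X^{k+1}Y^{k+1}\|\le\varepsilon_k$ and $\lambda_{\min}(X^{k+1})\ge-\tau_k$. Let $R^k=\mathcal{A}^*(y^k)-S^k-C$. Then $\lim_{k\to\infty}\|R^k\|=0$.
   Context: $\mathbb{S}_n$ denotes real symmetric $n\times n$ matrices, $\langle A,B\rangle=\mathrm{Tr}(A^{\intercal}B)$, $\|\cdot\|$ the Frobenius norm, $\lambda_{\min}$ the smallest eigenvalue. For a square matrix $M$, $\operatorname{diag}(M)$ is its diagonal vector; for a vector $z$, $\operatorname{Diag}(z)$ is the diagonal matrix with diagonal $z$; $\mathbf{1}$ is the all-ones vector. A KKT point of the stated problem is a tuple $(S,y,X,z)\in\mathbb{S}_n\times\mathbb{R}^m\times\mathbb{S}_n\times\mathbb{R}^n$ with $S=\mathcal{A}^*(y)-C$, $S\succeq0$, $\operatorname{diag}(S)=\mathbf{1}$, $X\succeq0$, $\langle X,S\rangle=0$ and $\mathcal{A}(X+\operatorname{Diag}(z))=b$. *)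

From HB Require Import structures.
From mathcomp Require Import all_boot all_order all_algebra.
From mathcomp Require Import all_classical all_reals all_analysis.
Set Implicit Arguments. Unset Strict Implicit. Unset Printing Implicit Defensive.
Import Order.TTheory GRing.Theory Num.Theory.
Local Open Scope ring_scope.

Section Defs.
Variable R : realType.

Definition symmx n (A : 'M[R]_n) : Prop := A^T = A.

Definition psd n (A : 'M[R]_n) : Prop :=
  symmx A /\ forall x : 'cV[R]_n, 0 <= (x^T *m A *m x) 0 0.

Definition mxdot p q (A B : 'M[R]_(p, q)) : R := \tr (A^T *m B).

Definition frob p q (A : 'M[R]_(p, q)) : R :=
  Num.sqrt (\sum_(i < p) \sum_(j < q) A i j ^+ 2).

Definition rownorm p q (Y : 'M[R]_(p, q)) (i : 'I_p) : R :=
  Num.sqrt (\sum_(j < q) Y i j ^+ 2).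

Definition mdiag n (M : 'M[R]_n) : 'cV[R]_n := \col_i M i i.
Definition Mdiag n (z : 'cV[R]_n) : 'M[R]_n := diag_mx z^T.

Definition opA m n (Am : 'I_m -> 'M[R]_n) (X : 'M[R]_n) : 'cV[R]_m :=
  \col_i mxdot (Am i) X.
Definition opAadj m n (Am : 'I_m -> 'M[R]_n) (y : 'cV[R]_m) : 'M[R]_n :=
  \sum_(i < m) y i 0 *: Am i.
(* the matrix of A A^* *)
Definition AAs m n (Am : 'I_m -> 'M[R]_n) : 'M[R]_m :=
  \matrix_(i, j) mxdot (Am i) (Am j).

(* KKT point of inf {<D,S+C> : S = A^*(y) - C, S psd, diag S = 1} *)
Definition KKT_point m n (Am : 'I_m -> 'M[R]_n) (b : 'cV[R]_m) (C : 'M[R]_n)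
  (S : 'M[R]_n) (y : 'cV[R]_m) (X : 'M[R]_n) (z : 'cV[R]_n) : Prop :=
  S = opAadj Am y - C /\ psd S /\ mdiag S = const_mx 1 /\ psd X /\
  mxdot X S = 0 /\ opA Am (X + Mdiag z) = b.
End Defs.

From HB Require Import structures.
From mathcomp Require Import all_boot all_order all_algebra.
From mathcomp Require Import all_classical all_reals all_analysis.
From mathcomp Require Import sesquilinear spectral.
From mathcomp.real_closed Require Import complex.
From mathcomp Require Import ring lra.

(* Let (S0, y0, X0, z0) be a KKT point.  The error G_k = Xt_k + D - X0 - Diag z0
   of the multiplier estimate lies in ker A and satisfies
   G_k = G_{k+1} + sigma_k R_{k+1}, hence
     ||G_k||^2 = ||G_{k+1}||^2 + 2 sigma_k <G_{k+1}, R_{k+1}> + sigma_k^2 ||R_{k+1}||^2.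
   Since S0 = A^*(y0) - C, the residual R_{k+1} equals S0 - S_{k+1} modulo the
   range of A^*, which is orthogonal to G_{k+1}.  As S_{k+1} and S0 both have
   unit diagonal, the Diag terms drop out of <S_{k+1} - S0, G_{k+1}>, and approximate
   complementarity (||X_{k+1} Y_{k+1}|| <= eps_k, lambda_min(X_{k+1}) >= -tau_k,
   together with X0, S0 psd and <X0, S0> = 0) bounds it by
   delta_k = (n+1) eps_k / 2 + n tau_k.  So
     sigma_min^2 ||R_{k+1}||^2 <= ||G_k||^2 - ||G_{k+1}||^2 + 2 sigma_max delta_k,
   and since delta is summable, so is ||R_k||^2. *)

Set Implicit Arguments.
Unset Strict Implicit.
Unset Printing Implicit Defensive.
Import Order.TTheory GRing.Theory Num.Theory.
Import numFieldNormedType.Exports.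
Local Open Scope classical_set_scope.
Local Open Scope ring_scope.

Section FrobeniusInnerProduct.
Variables (R : realType) (p q : nat).
Implicit Types A B : 'M[R]_(p, q).

Lemma mxdotE A B : mxdot A B = \sum_i \sum_j A i j * B i j.
Proof.
rewrite /mxdot /mxtrace exchange_big; apply: eq_bigr => j _.
by rewrite mxE; apply: eq_bigr => i _; rewrite mxE.
Qed.

Lemma mxdotC A B : mxdot A B = mxdot B A.
Proof. by rewrite /mxdot -mxtrace_tr trmx_mul trmxK. Qed.

Fact mxdot_is_linear A : linear_for *%R (mxdot A).
Proof. by move=> c B B'; rewrite /mxdot mulmxDr -scalemxAr mxtraceD mxtraceZ. Qed.

HB.instance Definition _ A :=
  GRing.isLinear.Build R 'M[R]_(p, q) R *%R (mxdot A) (mxdot_is_linear A).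

Lemma mxdotDl A A' B : mxdot (A + A') B = mxdot A B + mxdot A' B.
Proof. by rewrite !(mxdotC _ B) raddfD. Qed.

Lemma mxdotZl c A B : mxdot (c *: A) B = c * mxdot A B.
Proof. by rewrite !(mxdotC _ B) linearZ. Qed.

Lemma mxdotBl A A' B : mxdot (A - A') B = mxdot A B - mxdot A' B.
Proof. by rewrite !(mxdotC _ B) raddfB. Qed.

Lemma mxdot_ge0 A : 0 <= mxdot A A.
Proof.
by rewrite mxdotE sumr_ge0 // => i _; rewrite sumr_ge0 // => j _; rewrite -expr2 sqr_ge0.
Qed.

Lemma frobE A : frob A = Num.sqrt (mxdot A A).
Proof. by rewrite /frob mxdotE; under eq_bigr do under eq_bigr do rewrite expr2. Qed.

Lemma mxdot_sqr_expand A B c :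
  mxdot (A + c *: B) (A + c *: B) =
    mxdot A A + 2 * c * mxdot A B + c ^+ 2 * mxdot B B.
Proof. by rewrite mxdotDl !raddfD /= !linearZ /= !mxdotZl (mxdotC B A); ring. Qed.

Lemma mxdot_le_AMGM A B t : 0 < t ->
  mxdot A B <= (t * mxdot A A + mxdot B B / t) / 2.
Proof.
move=> t_gt0; rewrite -subr_ge0.
have := mxdot_ge0 (A + (- t^-1) *: B); rewrite mxdot_sqr_expand => sq_ge0.
have -> : (t * mxdot A A + mxdot B B / t) / 2 - mxdot A B =
  t / 2 * (mxdot A A + 2 * - t^-1 * mxdot A B + (- t^-1) ^+ 2 * mxdot B B).
  by field; rewrite gt_eqF.
by rewrite mulr_ge0 // divr_ge0 // ltW.
Qed.

End FrobeniusInnerProduct.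

Lemma eigenvalue_spectral_diag (C : numClosedFieldType) n (A : 'M[C]_n) :
  A \is normalmx -> forall i, eigenvalue A (spectral_diag A 0 i).
Proof.
move=> /orthomx_spectralP; set P := spectralmx A; set d := spectral_diag A.
move=> A_eq i; have P_unit : P \in unitmx := spectral_unit A.
apply/eigenvalueP; exists (row i P).
  rewrite {1}A_eq -row_mul !mulmxA mulmxV // mul1mx mul_diag_mx.
  by apply/rowP => j; rewrite !mxE.
apply/eqP => Pi0.
have /matrixP/(_ 0 i) : delta_mx 0 i = 0 :> 'rV[C]_n.
  by apply: (row_free_inj (etrans (row_free_unit P) P_unit)); rewrite mul0mx -rowE.
by rewrite !mxE !eqxx => /eqP; rewrite oner_eq0.
Qed.

Section PsdTrace.
Variable R : realType.
Local Open Scope complex_scope.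

Lemma quad_formE n (S : 'M[R]_n) (x : 'cV[R]_n) :
  (x^T *m S *m x) 0 0 = \sum_j \sum_k x j 0 * S j k * x k 0.
Proof.
rewrite mxE exchange_big /=; apply: eq_bigr => j _.
by rewrite mxE big_distrl /=; apply: eq_bigr => k _; rewrite !mxE.
Qed.

Lemma eigenvalue_map_real n (X : 'M[R]_n) r :
  eigenvalue (map_mx (real_complex R) X) r%:C -> eigenvalue X r.
Proof. by rewrite !eigenvalue_root_char -map_char_poly fmorph_root. Qed.

Lemma psd_complex_quad_ge0 n (S : 'M[R]_n) (u : 'I_n -> R[i]) : psd S ->
  0 <= \sum_j \sum_k u j * (S j k)%:C * (u k)^*.
Proof.
move=> [S_sym S_psd].
pose a : 'cV[R]_n := \col_j complex.Re (u j).
pose b : 'cV[R]_n := \col_j complex.Im (u j).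
have uE j : u j = a j 0 +i* b j 0 by rewrite !mxE; case: (u j).
have S_symE j k : S k j = S j k by rewrite -[in LHS]S_sym mxE.
have imag_part0 : \sum_j \sum_k S j k * (b j 0 * a k 0 - a j 0 * b k 0) = 0.
  transitivity (\sum_j \sum_k S j k * (b j 0 * a k 0) -
                \sum_j \sum_k S j k * (a j 0 * b k 0)).
    by rewrite -sumrB; apply: eq_bigr => j _; rewrite -sumrB; apply: eq_bigr => k _; ring.
  apply/eqP; rewrite subr_eq0 exchange_big /=; apply/eqP.
  by apply: eq_bigr => j _; apply: eq_bigr => k _; rewrite S_symE; ring.
have -> : \sum_j \sum_k u j * (S j k)%:C * (u k)^* =
    (\sum_j \sum_k (a j 0 * S j k * a k 0 + b j 0 * S j k * b k 0))%:C +
    'i * (\sum_j \sum_k S j k * (b j 0 * a k 0 - a j 0 * b k 0))%:C.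
  rewrite !rmorph_sum mulr_sumr -big_split; apply: eq_bigr => j _.
  rewrite !rmorph_sum mulr_sumr -big_split; apply: eq_bigr => k _.
  by rewrite !uE; simpc; congr (_ +i* _); ring.
rewrite imag_part0 mulr0 addr0 ler0c.
under eq_bigr do rewrite big_split.
by rewrite big_split -!quad_formE addr_ge0.
Qed.

(* Diagonalize X = P^H diag(d) P over C: then <S, X> = sum_i (P S P^H)_ii d_i,
   where the weights (P S P^H)_ii are nonnegative and sum to tr S. *)
Lemma psd_mxdot_ge_eig n (S X : 'M[R]_n) c : psd S -> symmx X ->
  (forall a, eigenvalue X a -> c <= a) -> c * \tr S <= mxdot S X.
Proof.
move=> S_psd X_sym X_eig; have [S_sym _] := S_psd.
set XC := map_mx (real_complex R) X; set SC := map_mx (real_complex R) S.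
have XC_sym : XC \is symmetricmx.
  by apply/is_hermitianmxP; rewrite expr0 scale1r map_mx_id // map_trmx X_sym.
have XC_real : XC \is a realmx by apply/mxOverP => i j; rewrite mxE complex_real.
have XC_normal := symmetric_normalmx XC_sym XC_real.
have /orthomx_spectralP := XC_normal.
set P := spectralmx XC; set d := spectral_diag XC => XC_eq.
have P_unitary : P \is unitarymx := spectral_unitarymx XC.
have d_ge i : c%:C <= d 0 i.
  have /mxOverP/(_ 0 i)/complex_realP [r d_eq] :=
    hermitian_spectral_diag_real (realsym_hermsym XC_sym XC_real).
  have := eigenvalue_spectral_diag XC_normal i.
  by rewrite -/d d_eq => /eigenvalue_map_real/X_eig; rewrite lecR.
pose Q := P *m SC *m (P ^t Num.conj)%sesqui.
have Q_ge0 i : 0 <= Q i i.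
  have -> : Q i i = \sum_j \sum_k P i j * (S j k)%:C * (P i k)^*.
    rewrite mxE exchange_big /=; apply: eq_bigr => k _.
    by rewrite !mxE big_distrl /=; apply: eq_bigr => j _; rewrite !mxE.
  exact: psd_complex_quad_ge0.
rewrite -lecR rmorphM /mxdot S_sym -!trace_map_mx map_mxM -/SC -/XC XC_eq.
rewrite invmx_unitary //.
have -> : \tr SC = \tr Q.
  by rewrite /Q mxtrace_mulC mulmxA -invmx_unitary // mulVmx ?mul1mx ?unitarymx_unit.
have -> : \tr (SC *m ((P ^t Num.conj)%sesqui *m diag_mx d *m P)) = \tr (Q *m diag_mx d).
  by rewrite mulmxA mxtrace_mulC /Q !mulmxA.
rewrite /mxtrace mulr_sumr; apply: ler_sum => i _.
by rewrite mul_mx_diag [leRHS]mxE [leRHS]mulrC ler_wpM2r.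
Qed.

End PsdTrace.

Section Symmetric.
Variables (R : realType) (n : nat).
Implicit Types A B : 'M[R]_n.

Lemma symmxD A B : symmx A -> symmx B -> symmx (A + B).
Proof. by rewrite /symmx raddfD => /= -> ->. Qed.

Lemma symmxB A B : symmx A -> symmx B -> symmx (A - B).
Proof. by rewrite /symmx raddfB => /= -> ->. Qed.

Lemma symmxZ c A : symmx A -> symmx (c *: A).
Proof. by rewrite /symmx linearZ => /= ->. Qed.

Lemma symmx_Mdiag (w : 'cV[R]_n) : symmx (Mdiag w).
Proof. by rewrite /symmx tr_diag_mx. Qed.

Lemma symmx_gram p (Y : 'M[R]_(n, p)) : symmx (Y *m Y^T).
Proof. by rewrite /symmx trmx_mul trmxK. Qed.

Lemma mxdot_Mdiag A (w : 'cV[R]_n) : mxdot A (Mdiag w) = \sum_i A i i * w i 0.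
Proof.
rewrite mxdotE; apply: eq_bigr => i _; rewrite (bigD1 i) //= big1 ?addr0.
  by rewrite !mxE eqxx mulr1n.
by move=> j ji; rewrite !mxE eq_sym (negPf ji) mulr0n mulr0.
Qed.

End Symmetric.

Section Gram.
Variables (R : realType) (n p : nat) (Y : 'M[R]_(n, p)).

Lemma mxdot_gram (X : 'M[R]_n) : mxdot (Y *m Y^T) X = mxdot Y (X *m Y).
Proof. by rewrite /mxdot trmx_mul trmxK -mulmxA mxtrace_mulC mulmxA. Qed.

Lemma gram_diag i : (Y *m Y^T) i i = rownorm Y i ^+ 2.
Proof.
rewrite mxE sqr_sqrtr ?sumr_ge0 // => [|j _]; last exact: sqr_ge0.
by apply: eq_bigr => j _; rewrite mxE expr2.
Qed.

Lemma mxdot_rownorm : mxdot Y Y = \sum_i rownorm Y i ^+ 2.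
Proof. by rewrite /mxdot mxtrace_mulC; apply: eq_bigr => i _; rewrite gram_diag. Qed.

Lemma mxdot_gram_psd_ge0 (X : 'M[R]_n) : psd X -> 0 <= mxdot (Y *m Y^T) X.
Proof.
move=> [_ X_psd]; rewrite mxdot_gram /mxdot /mxtrace sumr_ge0 // => l _.
have -> : (Y^T *m (X *m Y)) l l = ((col l Y)^T *m X *m col l Y) 0 0.
  rewrite quad_formE mxE; apply: eq_bigr => j _; rewrite !mxE big_distrr /=.
  by apply: eq_bigr => k _; rewrite !mxE; ring.
exact: X_psd.
Qed.

End Gram.

Section Operator.
Variables (R : realType) (m n : nat) (Am : 'I_m -> 'M[R]_n).

Fact opA_is_linear : linear (opA Am).
Proof. by move=> c X X'; apply/colP => i; rewrite !mxE linearP. Qed.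

HB.instance Definition _ :=
  GRing.isLinear.Build R 'M[R]_n 'cV[R]_m _ (opA Am) opA_is_linear.

Lemma opA_adj y : opA Am (opAadj Am y) = AAs Am *m y.
Proof.
apply/colP => i; rewrite !mxE raddf_sum; apply: eq_bigr => j _.
by rewrite /= linearZ !mxE mulrC.
Qed.

Lemma opA_adj_invK v : AAs Am \in unitmx ->
  opA Am (opAadj Am (invmx (AAs Am) *m v)) = v.
Proof. by move=> AAs_unit; rewrite opA_adj mulmxA mulmxV // mul1mx. Qed.

Lemma mxdot_adj_ker y W : opA Am W = 0 -> mxdot (opAadj Am y) W = 0.
Proof.
move=> AW0; rewrite mxdotC raddf_sum big1 // => i _ /=.
have /colP/(_ i) := AW0; rewrite !mxE => AiW0.
by rewrite linearZ /= mxdotC AiW0 mulr0.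
Qed.

Lemma symmx_adj y : (forall i, symmx (Am i)) -> symmx (opAadj Am y).
Proof.
move=> A_sym; rewrite /symmx /opAadj raddf_sum /=.
by apply: eq_bigr => i _; rewrite linearZ /= A_sym.
Qed.

End Operator.

Section Complementarity.
Variables (R : realType) (n p : nat).

Lemma mxdot_gram_le_frob (Y : 'M[R]_(n, p)) (X : 'M[R]_n) eps :
  (forall i, rownorm Y i = 1) -> 0 < eps -> frob (X *m Y) <= eps ->
  mxdot (Y *m Y^T) X <= (n%:R + 1) / 2 * eps.
Proof.
move=> Y_rows eps_gt0 XY_le.
rewrite mxdot_gram (le_trans (mxdot_le_AMGM _ _ eps_gt0)) //.
have -> : mxdot Y Y = n%:R.
  rewrite mxdot_rownorm (eq_bigr (fun=> 1)) ?sumr_const ?card_ord // => i _.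
  by rewrite Y_rows expr1n.
have : mxdot (X *m Y) (X *m Y) / eps <= eps.
  rewrite ler_pdivrMr // -expr2 -(sqr_sqrtr (mxdot_ge0 _)) -frobE.
  by rewrite !expr2 ler_pM // frobE sqrtr_ge0.
lra.
Qed.

Lemma inexact_complementarity_bound (Y : 'M[R]_(n, p)) (S0 X0 X : 'M[R]_n)
    (w w0 : 'cV[R]_n) eps tau :
  (forall i, rownorm Y i = 1) -> psd S0 -> mdiag S0 = const_mx 1 ->
  psd X0 -> mxdot X0 S0 = 0 -> symmx X ->
  (forall a, eigenvalue X a -> - tau <= a) ->
  0 < eps -> frob (X *m Y) <= eps ->
  mxdot (Y *m Y^T - S0) (X + Mdiag w - X0 - Mdiag w0) <=
    (n%:R + 1) / 2 * eps + n%:R * tau.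
Proof.
move=> Y_rows S0_psd S0_diag X0_psd X0S0 X_sym X_eig eps_gt0 XY_le.
have S0_ii i : S0 i i = 1 by move/colP: S0_diag => /(_ i); rewrite !mxE.
have diag_cancel v : mxdot (Y *m Y^T - S0) (Mdiag v) = 0.
  rewrite mxdot_Mdiag big1 // => i _.
  have -> : (Y *m Y^T - S0) i i = (Y *m Y^T) i i - S0 i i by rewrite !mxE.
  by rewrite gram_diag Y_rows S0_ii expr1n subrr mul0r.
have tr_S0 : \tr S0 = n%:R.
  by rewrite /mxtrace (eq_bigr (fun=> 1)) ?sumr_const ?card_ord.
have S0X_ge : - tau * n%:R <= mxdot S0 X by rewrite -tr_S0 psd_mxdot_ge_eig.
have SX0_ge0 := mxdot_gram_psd_ge0 Y X0_psd.
have SX_le := mxdot_gram_le_frob Y_rows eps_gt0 XY_le.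
rewrite !raddfB !raddfD /= !diag_cancel !mxdotBl (mxdotC S0 X0) X0S0.
lra.
Qed.

End Complementarity.

Lemma mxdot_fejer_step (R : realType) p q (e e' Rr : 'M[R]_(p, q))
    s smin smax delta :
  e = e' + s *: Rr -> 0 < smin <= s -> s <= smax -> 0 <= delta ->
  - delta <= mxdot e' Rr ->
  smin ^+ 2 * mxdot Rr Rr <= mxdot e e - mxdot e' e' + 2 * smax * delta.
Proof.
move=> -> /andP[smin_gt0 smin_le] s_le delta_ge0 pairing_ge.
have s_gt0 := lt_le_trans smin_gt0 smin_le.
rewrite mxdot_sqr_expand.
have : smin ^+ 2 <= s ^+ 2 by rewrite !expr2; apply: ler_pM => //; exact: ltW.
have : - (s * delta) <= s * mxdot e' Rr by rewrite -mulrN; apply: (ler_wpM2l (ltW s_gt0)).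
have : s * delta <= smax * delta := ler_wpM2r delta_ge0 s_le.
have := mxdot_ge0 Rr.
nra.
Qed.

Lemma frob_cvg0 (R : realType) p q (A : nat -> 'M[R]_(p, q)) :
  (fun k => mxdot (A k) (A k)) @ \oo --> 0 -> (fun k => frob (A k)) @ \oo --> 0.
Proof.
move=> /cvg_comp/(_ (@sqrt_continuous R 0)); rewrite sqrtr0.
by rewrite (_ : _ \o _ = fun k => frob (A k)) //; apply/funext => k; rewrite /= frobE.
Qed.

Lemma descent_cvg0 (R : realType) (u a d : R ^nat) c : 0 < c ->
  (forall k, 0 <= u k) -> (forall k, 0 <= a k) -> (forall k, 0 <= d k) ->
  cvgn (series d) -> (forall k, c * a k <= u k - u k.+1 + d k) ->
  a @ \oo --> 0.
Proof.
move=> c_gt0 u_ge0 a_ge0 d_ge0 d_sum a_le.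
suff /cvg_series_cvg_0/(cvgMl_tmp (a := c^-1)) : cvgn (series (c *: a)).
  rewrite mulr0 (_ : (fun k => c^-1 * (c *: a) k) = a) //.
  by apply/funext => k; rewrite /= mulKf ?gt_eqF.
apply: nondecreasing_is_cvgn.
  by apply: nondecreasing_series => k _ _; exact: mulr_ge0 (ltW c_gt0) (a_ge0 k).
exists (u 0%N + limn (series d)) => _ [N _ <-].
have d_le : series d N <= limn (series d).
  by apply: nondecreasing_cvgn_le d_sum N; apply: nondecreasing_series => k _ _.
suff : series (c *: a) N <= u 0%N - u N + series d N by have := u_ge0 N; lra.
elim: N {d_le} => [|N IH]; first by rewrite /series /= !big_geq // subrr add0r.
rewrite !seriesSr; change ((c *: a) N) with (c * a N); have := a_le N; lra.
Qed.

Section Iteration.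
Variables (R : realType) (n m : nat) (Am : 'I_m -> 'M[R]_n).
Variables (b : 'cV[R]_m) (C : 'M[R]_n).
Variables (S0 X0 : 'M[R]_n) (y0 : 'cV[R]_m) (z0 : 'cV[R]_n).
Variables (sigma eps tau : nat -> R) (p : nat -> nat) (Y : forall k, 'M[R]_(n, p k)).
Variables (S Xt X : nat -> 'M[R]_n) (y : nat -> 'cV[R]_m) (z : nat -> 'cV[R]_n).
Variables sigma_min sigma_max : R.
Hypothesis A_sym : forall i, symmx (Am i).
Hypothesis C_sym : symmx C.
Hypothesis AAs_unit : AAs Am \in unitmx.
Local Notation D := (opAadj Am (invmx (AAs Am) *m b)).
Hypothesis S0E : S0 = opAadj Am y0 - C.
Hypothesis S0_psd : psd S0.
Hypothesis S0_diag : mdiag S0 = const_mx 1.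
Hypothesis X0_psd : psd X0.
Hypothesis X0S0 : mxdot X0 S0 = 0.
Hypothesis X0_feas : opA Am (X0 + Mdiag z0) = b.
Hypothesis smin_gt0 : 0 < sigma_min.
Hypothesis sigma_bd : forall k, sigma_min <= sigma k <= sigma_max.
Hypothesis eps_gt0 : forall k, 0 < eps k.
Hypothesis tau_gt0 : forall k, 0 < tau k.
Hypothesis eps_sum : cvgn (series eps).
Hypothesis tau_sum : cvgn (series tau).
Hypothesis Xt0 : Xt 0%N = 0.
Hypothesis Y_rows : forall k i, rownorm (Y k.+1) i = 1.
Hypothesis SE : forall k, S k.+1 = Y k.+1 *m (Y k.+1)^T.
Hypothesis yE : forall k, y k.+1 = invmx (AAs Am) *m opA Am (S k.+1 + C).
Hypothesis XtE : forall k,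
  Xt k.+1 = Xt k - sigma k *: (opAadj Am (y k.+1) - S k.+1 - C).
Hypothesis XE : forall k, X k.+1 = Xt k.+1 + D - Mdiag (z k.+1).
Hypothesis XY_le : forall k, frob (X k.+1 *m Y k.+1) <= eps k.
Hypothesis X_eig : forall k a, eigenvalue (X k.+1) a -> - tau k <= a.

Local Notation residual k := (opAadj Am (y k) - S k - C).
(* [Xt k + D] estimates the multiplier [X0 + Mdiag z0]; [gap k] is its error. *)
Local Notation gap k := (Xt k + D - X0 - Mdiag z0).
Local Notation delta k := ((n%:R + 1) / 2 * eps k + n%:R * tau k).

Lemma opA_residual k : opA Am (residual k.+1) = 0.
Proof. by rewrite !raddfB /= yE opA_adj_invK // raddfD addrAC addrK subrr. Qed.

Lemma opA_Xt k : opA Am (Xt k) = 0.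
Proof.
elim: k => [|k IH]; first by rewrite Xt0 raddf0.
by rewrite XtE raddfB /= linearZ /= IH opA_residual scaler0 subrr.
Qed.

Lemma opA_gap k : opA Am (gap k) = 0.
Proof.
rewrite !raddfB raddfD /= opA_Xt add0r opA_adj_invK // -X0_feas raddfD /=.
by rewrite addrAC addrK subrr.
Qed.

Lemma symmx_Xt k : symmx (Xt k).
Proof.
elim: k => [|k IH]; first by rewrite /symmx Xt0 trmx0.
rewrite XtE SE; apply: symmxB IH (symmxZ _ (symmxB _ C_sym)).
exact: symmxB (symmx_adj _ A_sym) (symmx_gram _).
Qed.

Lemma gap_step k : gap k = gap k.+1 + sigma k *: residual k.+1.
Proof. by rewrite XtE; apply/matrixP => i j; rewrite !mxE; lra. Qed.

Lemma mxdot_gap_residual k :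
  mxdot (gap k.+1) (residual k.+1) = - mxdot (S k.+1 - S0) (gap k.+1).
Proof.
have CE : C = opAadj Am y0 - S0 by rewrite S0E opprB addrC subrK.
move: (gap k.+1) (opA_gap k.+1) => E AE.
by rewrite CE !raddfB /= !(mxdotC E) !mxdot_adj_ker // mxdotBl; lra.
Qed.

Lemma gap_residual_pairing_ge k :
  - delta k <= mxdot (gap k.+1) (residual k.+1).
Proof.
have XtE' : Xt k.+1 + D = X k.+1 + Mdiag (z k.+1) by rewrite XE subrK.
rewrite mxdot_gap_residual lerNl opprK XtE' SE.
apply: inexact_complementarity_bound => //.
- rewrite XE; apply: symmxB (symmx_Mdiag _).
  exact: symmxD (symmx_Xt _) (symmx_adj _ A_sym).
- exact: X_eig.
Qed.

Lemma delta_ge0 k : 0 <= delta k.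
Proof. by rewrite addr_ge0 // mulr_ge0 ?divr_ge0 ?addr_ge0 // ltW. Qed.

Lemma residual_fejer k :
  sigma_min ^+ 2 * mxdot (residual k.+1) (residual k.+1) <=
    mxdot (gap k) (gap k) - mxdot (gap k.+1) (gap k.+1) + 2 * sigma_max * delta k.
Proof.
have /andP[smin_le le_smax] := sigma_bd k.
apply: mxdot_fejer_step (gap_step k) _ le_smax (delta_ge0 k) (gap_residual_pairing_ge k).
by rewrite smin_gt0.
Qed.

Lemma residual_cvg0 : (fun k => frob (residual k)) @ \oo --> 0.
Proof.
have smax_ge0 : 0 <= sigma_max.
  have /andP[smin_le le_smax] := sigma_bd 0%N.
  exact: le_trans (ltW smin_gt0) (le_trans smin_le le_smax).
have delta_sum : cvgn (series (fun k => 2 * sigma_max * delta k)).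
  rewrite (_ : (fun k => _) = 2 * sigma_max *: ((n%:R + 1) / 2 *: eps + n%:R *: tau)) //.
  by apply/is_cvg_seriesZ/is_cvg_seriesD; apply: is_cvg_seriesZ.
rewrite -cvg_shiftS; apply: frob_cvg0.
apply: (descent_cvg0 _ _ _ _ delta_sum residual_fejer) => [|k|k|k].
- by rewrite exprn_gt0.
- exact: mxdot_ge0.
- exact: mxdot_ge0.
- by rewrite !mulr_ge0 ?delta_ge0.
Qed.

End Iteration.

Theorem lemma5p3 (R : realType) (n m : nat) (Am : 'I_m -> 'M[R]_n)
  (b : 'cV[R]_m) (C : 'M[R]_n)
  (sigma_min sigma_max : R) (eps tau : nat -> R)
  (sigma : nat -> R) (p : nat -> nat) (Y : forall k : nat, 'M[R]_(n, p k))
  (S : nat -> 'M[R]_n) (y : nat -> 'cV[R]_m) (Xt : nat -> 'M[R]_n)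
  (z : nat -> 'cV[R]_n) (X : nat -> 'M[R]_n) :
  (0 < n)%N -> (0 < m)%N ->
  (forall i, symmx (Am i)) -> symmx C ->
  AAs Am \in unitmx ->
  let D := opAadj Am (invmx (AAs Am) *m b) in
  (exists S0 y0 X0 z0, KKT_point Am b C S0 y0 X0 z0) ->
  0 < sigma_min -> sigma_min < sigma_max ->
  (forall k, 0 < eps k) -> (forall k, 0 < tau k) ->
  cvgn (series eps) -> cvgn (series tau) ->
  y 0%N = 0 -> Xt 0%N = 0 ->
  (forall k, sigma_min <= sigma k <= sigma_max) ->
  (forall k, (0 < p k.+1)%N) ->
  (forall k (i : 'I_n), rownorm (Y k.+1) i = 1) ->
  (forall k, S k.+1 = Y k.+1 *m (Y k.+1)^T) ->
  (forall k, y k.+1 = invmx (AAs Am) *m opA Am (S k.+1 + C)) ->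
  (forall k, Xt k.+1 = Xt k - sigma k *: (opAadj Am (y k.+1) - S k.+1 - C)) ->
  (forall k, z k.+1 = mdiag ((Xt k.+1 + D) *m S k.+1)) ->
  (forall k, X k.+1 = Xt k.+1 + D - Mdiag (z k.+1)) ->
  (forall k, frob (X k.+1 *m Y k.+1) <= eps k) ->
  (forall k a, eigenvalue (X k.+1) a -> - tau k <= a) ->
  (fun k => frob (opAadj Am (y k) - S k - C)) @ \oo --> (0 : R).
Proof.
move=> _ _ A_sym C_sym AAs_unit D.
move=> [S0 [y0 [X0 [z0 [S0E [S0_psd [S0_diag [X0_psd [X0S0 X0_feas]]]]]]]]].
move=> smin_gt0 _ eps_gt0 tau_gt0 eps_sum tau_sum _ Xt0 sigma_bd _ Y_rows SE yE XtE _ XE.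
move=> XY_le X_eig.
exact: (residual_cvg0 A_sym C_sym AAs_unit S0E S0_psd S0_diag X0_psd X0S0 X0_feas
  smin_gt0 sigma_bd eps_gt0 tau_gt0 eps_sum tau_sum Xt0 Y_rows SE yE XtE XE XY_le X_eig).
Qed.
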